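(* There exist no positive integers $a,b,c$ with $1\le a\le b$ and $c\ge 6$ such that every nonnegative integer can be written as $ax^2+by^2+c(z^2+zw+w^2)$ with $x,y,z,w\in\mathbb{Z}$. *)

From Stdlib Require Import ZArith.
Open Scope Z_scope.

Definition represents (a b c n : Z) : Prop :=
  exists x y z w : Z, n = a * x ^ 2 + b * y ^ 2 + c * (z ^ 2 + z * w + w ^ 2).

(* Since z^2 + z w + w^2 is positive definite, every n < c represented by
   a x^2 + b y^2 + c (z^2 + z w + w^2) is already represented by the binary
   form a x^2 + b y^2.  Representing 1 forces a = 1, and then representing 2
   forces b = 1 or b = 2.  But 3 is not of the form x^2 + y^2 and 5 is not of
   the form x^2 + 2 y^2, and both are below 6 <= c. *)

From Stdlib Require Import ZArith Lia.
Open Scope Z_scope.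

Lemma eisenstein_form_nonneg z w : 0 <= z ^ 2 + z * w + w ^ 2.
Proof. nia. Qed.

Lemma represents_below_c a b c n :
  0 <= a -> 0 <= b -> 0 <= n < c -> represents a b c n ->
  exists x y, n = a * x ^ 2 + b * y ^ 2.
Proof.
  intros Ha Hb Hn [x [y [z [w E]]]].
  pose proof (eisenstein_form_nonneg z w).
  assert (Hbin : 0 <= a * x ^ 2 + b * y ^ 2) by nia.
  assert (Hzero : z ^ 2 + z * w + w ^ 2 = 0) by nia.
  exists x, y. rewrite Hzero in E. lia.
Qed.

Lemma square_lt_abs_bound x k : 0 <= k -> x ^ 2 < (k + 1) ^ 2 -> -k <= x <= k.
Proof. intros Hk H. nia. Qed.

Lemma sum_two_squares_neq_3 x y : x ^ 2 + y ^ 2 <> 3.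
Proof.
  intro E.
  assert (-1 <= x <= 1) by (apply (square_lt_abs_bound x 1); nia).
  assert (-1 <= y <= 1) by (apply (square_lt_abs_bound y 1); nia).
  assert (x ^ 2 <= 1 /\ y ^ 2 <= 1) by nia. lia.
Qed.

Lemma square_plus_twice_square_neq_5 x y : x ^ 2 + 2 * y ^ 2 <> 5.
Proof.
  intro E.
  assert (-2 <= x <= 2) by (apply (square_lt_abs_bound x 2); nia).
  assert (-1 <= y <= 1) by (apply (square_lt_abs_bound y 1); nia).
  assert (x = -2 \/ x = -1 \/ x = 0 \/ x = 1 \/ x = 2) as Hx by lia.
  assert (y = -1 \/ y = 0 \/ y = 1) as Hy by lia.
  destruct Hx as [-> | [-> | [-> | [-> | ->]]]]; destruct Hy as [-> | [-> | ->]]; lia.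
Qed.

Lemma binary_represents_1 a b x y :
  1 <= a <= b -> 1 = a * x ^ 2 + b * y ^ 2 -> a = 1.
Proof.
  intros Hab E.
  destruct (Z.eq_dec x 0) as [-> | Hx].
  - assert (1 <= y ^ 2) by (destruct (Z.eq_dec y 0); nia). nia.
  - assert (1 <= x ^ 2) by nia. nia.
Qed.

Lemma binary_represents_2 b x y :
  1 <= b -> 2 = x ^ 2 + b * y ^ 2 -> b = 1 \/ b = 2.
Proof.
  intros Hb E.
  destruct (Z.eq_dec y 0) as [-> | Hy].
  - assert (-1 <= x <= 1) by (apply (square_lt_abs_bound x 1); nia).
    assert (x ^ 2 <= 1) by nia. lia.
  - assert (1 <= y ^ 2) by nia.
    assert (0 <= x ^ 2) by nia. nia.
Qed.

Theorem theorem7p2 :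
  ~ exists a b c : Z,
      1 <= a /\ a <= b /\ 6 <= c /\
      forall n : Z, 0 <= n -> represents a b c n.
Proof.
  intros [a [b [c [Ha [Hab [Hc Hrep]]]]]].
  assert (Hbin : forall n, 0 <= n <= 5 -> exists x y, n = a * x ^ 2 + b * y ^ 2).
  { intros n Hn. apply (represents_below_c a b c); [lia | lia | lia |].
    apply Hrep; lia. }
  destruct (Hbin 1 ltac:(lia)) as [x1 [y1 E1]].
  pose proof (binary_represents_1 a b x1 y1 ltac:(lia) E1) as ->.
  destruct (Hbin 2 ltac:(lia)) as [x2 [y2 E2]].
  rewrite Z.mul_1_l in E2.
  destruct (binary_represents_2 b x2 y2 ltac:(lia) E2) as [-> | ->].
  - destruct (Hbin 3 ltac:(lia)) as [x [y E]].
    apply (sum_two_squares_neq_3 x y). lia.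
  - destruct (Hbin 5 ltac:(lia)) as [x [y E]].
    apply (square_plus_twice_square_neq_5 x y). lia.
Qed.
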